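(* Let $G$ be a finite subgroup of $O(2)\times O(2)\times O(2)$. If the Fitting subgroup $F(G)$ is cyclic, then $G$ belongs to $\mathcal{G}_{1}^{2}$, i.e. $G$ has a cyclic normal subgroup $H$ such that $G/H$ is a $2$-group.
   Context: The Fitting subgroup $F(G)$ is the unique largest nilpotent normal subgroup of $G$. For primes $p,q$, $\mathcal{G}_p^q$ is the class of finite groups $G$ with a normal series $P\trianglelefteq H\trianglelefteq G$ where $P$ is a $p$-group, $H/P$ is cyclic and $G/H$ is a $q$-group; $p=1$ means $P$ is trivial. *)

From HB Require Import structures.
From mathcomp Require Import all_boot all_order all_algebra all_fingroup all_solvable.
From mathcomp Require Import reals.
Set Implicit Arguments. Unset Strict Implicit. Unset Printing Implicit Defensive.
Import GRing.Theory Num.Theory.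
Local Open Scope ring_scope.

Definition orthogonal2 (R : realType) (A : 'M[R]_2) : Prop := A *m A^T = 1%:M.

(* The finite group G is (isomorphic to) a subgroup of O(2) x O(2) x O(2):
   there are three homomorphisms f1 f2 f3 : G -> O(2) whose product map
   G -> O(2)^3 is injective. *)
Definition subgroup_O2cube (R : realType) (gT : finGroupType) (G : {group gT}) : Prop :=
  exists f1 f2 f3 : gT -> 'M[R]_2,
    [/\ {in G, forall x, [/\ orthogonal2 (f1 x), orthogonal2 (f2 x) & orthogonal2 (f3 x)]},
        {in G &, forall x y, [/\ f1 (x * y)%g = f1 x *m f1 y,
                                 f2 (x * y)%g = f2 x *m f2 y &
                                 f3 (x * y)%g = f3 x *m f3 y]} &
        {in G &, forall x y, f1 x = f1 y -> f2 x = f2 y -> f3 x = f3 y -> x = y}].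

(* On the subgroup of G where every [det (f_i x)] equals 1, the three
   representations take values in SO(2), which is abelian, so by joint
   injectivity this subgroup is an abelian normal subgroup and lies in F(G).
   Since squares of orthogonal matrices have determinant 1, every square of G
   lies in it, so G/F(G) has exponent dividing 2; as F(G) is cyclic by
   hypothesis it is the required H. *)

From HB Require Import structures.
From mathcomp Require Import all_boot all_order all_algebra all_fingroup all_solvable.
From mathcomp Require Import reals.
From mathcomp Require Import ring.

Set Implicit Arguments.
Unset Strict Implicit.
Unset Printing Implicit Defensive.

Import GRing.Theory Num.Theory.

Section TwoByTwo.
Local Open Scope ring_scope.

Lemma ord2_cases (i : 'I_2) : i = 0 \/ i = 1.
Proof. by case: i => [[|[|//]]] lti; [left | right]; apply: val_inj. Qed.

Lemma mulmx22E (R : pzSemiRingType) (A B : 'M[R]_2) i j :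
  (A *m B) i j = A i 0 * B 0 j + A i 1 * B 1 j.
Proof.
have lift01 : lift ord0 ord0 = 1 :> 'I_2 by apply: val_inj.
by rewrite mxE !big_ord_recl big_ord0 addr0 lift01.
Qed.

Lemma det_mx22 (R : comNzRingType) (A : 'M[R]_2) :
  \det A = A 0 0 * A 1 1 - A 0 1 * A 1 0.
Proof.
rewrite (expand_det_row A 0) !big_ord_recl big_ord0 addr0 /cofactor.
rewrite !det_mx11 !mxE /= expr0 expr1 mul1r mulN1r mulrN.
by congr (_ * _ - _ * _); congr (A _ _); apply: val_inj.
Qed.

Lemma det_orthogonal_sqr (R : comNzRingType) n (A : 'M[R]_n) :
  A *m A^T = 1%:M -> \det A ^+ 2 = 1.
Proof. by move/(congr1 determinant); rewrite det_mulmx det_tr det1 expr2. Qed.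

Lemma rotation_entries (R : realDomainType) (A : 'M[R]_2) :
  A *m A^T = 1%:M -> \det A = 1 -> A 1 1 = A 0 0 /\ A 1 0 = - A 0 1.
Proof.
move=> AAt detA; rewrite det_mx22 in detA.
have row0 := congr1 (fun M : 'M[R]_2 => M 0 0) AAt.
have row1 := congr1 (fun M : 'M[R]_2 => M 1 1) AAt.
rewrite /= !mulmx22E !mxE /= in row0 row1.
have sum_sqr0 : (A 1 1 - A 0 0) ^+ 2 + (A 1 0 + A 0 1) ^+ 2 = 0.
  transitivity ((A 0 0 * A 0 0 + A 0 1 * A 0 1) + (A 1 0 * A 1 0 + A 1 1 * A 1 1)
                - 2 * (A 0 0 * A 1 1 - A 0 1 * A 1 0)); first by ring.
  by rewrite row0 row1 detA mulr1 subrr.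
move/eqP: sum_sqr0; rewrite paddr_eq0 ?sqr_ge0 // !sqrf_eq0 subr_eq0 addr_eq0.
by case/andP=> /eqP-> /eqP->.
Qed.

Lemma rotations_commute (R : realDomainType) (A B : 'M[R]_2) :
  A *m A^T = 1%:M -> \det A = 1 -> B *m B^T = 1%:M -> \det B = 1 ->
  A *m B = B *m A.
Proof.
move=> AAt detA BBt detB.
have [A11 A10] := rotation_entries AAt detA.
have [B11 B10] := rotation_entries BBt detB.
apply/matrixP => i j; rewrite !mulmx22E.
by case: (ord2_cases i) => ->; case: (ord2_cases j) => ->;
  rewrite ?A11 ?A10 ?B11 ?B10; ring.
Qed.

End TwoByTwo.

Local Open Scope group_scope.

Lemma quotient_pgroup_of_expn (gT : finGroupType) p (G H : {group gT}) :
  prime p -> {in G, forall x, x ^+ p \in H} -> p.-group (G / H).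
Proof.
move=> p_pr expGp; rewrite -pnat_exponent; apply: pnat_dvd (pnat_id p_pr).
apply/exponentP => _ /morphimP[x Nx Gx ->].
by rewrite -morphX //= coset_id ?expGp.
Qed.

Section UnitFibre.
Variables (gT : finGroupType) (G : {group gT}) (R : nzRingType) (d : gT -> R).
Hypothesis dM : {in G &, forall x y, d (x * y) = (d x * d y)%R}.
Hypothesis d_sqr : {in G, forall x, (d x ^+ 2 = 1)%R}.

Lemma unit_fibre_normal_subgroup :
  exists K : {group gT},
    [/\ K <| G, {in K, forall x, d x = 1%R} & {in G, forall x, x ^+ 2 \in K}].
Proof.
have d1 : d 1 = 1%R by rewrite -[RHS](d_sqr (group1 G)) expr2 -dM ?mulg1.
have dVK x : x \in G -> (d x^-1 * d x = 1)%R by move=> Gx; rewrite -dM ?groupV ?mulVg.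
pose K := [set x in G | d x == 1%R].
have groupK : group_set K.
  apply/group_setP; split=> [|x y]; first by rewrite inE group1 d1 /=.
  rewrite !inE => /andP[Gx /eqP dx] /andP[Gy /eqP dy].
  by rewrite groupM // dM // dx dy mulr1 /=.
exists (Group groupK); split.
- apply/andP; split; first by apply/subsetP=> x; rewrite inE => /andP[].
  apply/subsetP=> y Gy; rewrite inE; apply/subsetP=> _ /imsetP[x Kx ->].
  move: Kx; rewrite !inE conjgE => /andP[Gx /eqP dx].
  by rewrite !groupM ?groupV //= !dM ?groupM ?groupV // dx mul1r dVK.
- by move=> x; rewrite inE => /andP[_ /eqP].
- by move=> x Gx; rewrite inE groupX //= expgS expg1 dM // -expr2 d_sqr.
Qed.

End UnitFibre.

Section O2Cube.
Local Open Scope ring_scope.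
Variables (R : realType) (gT : finGroupType) (G : {group gT}).
Variables f1 f2 f3 : gT -> 'M[R]_2.
Hypothesis fO : {in G, forall x,
  [/\ orthogonal2 (f1 x), orthogonal2 (f2 x) & orthogonal2 (f3 x)]}.
Hypothesis fM : {in G &, forall x y, [/\ f1 (x * y)%g = f1 x *m f1 y,
  f2 (x * y)%g = f2 x *m f2 y & f3 (x * y)%g = f3 x *m f3 y]}.
Hypothesis f_inj :
  {in G &, forall x y, f1 x = f1 y -> f2 x = f2 y -> f3 x = f3 y -> x = y}.

Let det_kernel (f : gT -> 'M[R]_2) :
  {in G, forall x, orthogonal2 (f x)} ->
  {in G &, forall x y, f (x * y)%g = f x *m f y} ->
  exists K : {group gT}, [/\ K <| G, {in K, forall x, \det (f x) = 1}
                                   & {in G, forall x, (x ^+ 2)%g \in K}].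
Proof.
move=> fOx fMx; apply: (unit_fibre_normal_subgroup (d := fun x => \det (f x))).
- by move=> x y Gx Gy /=; rewrite fMx ?det_mulmx.
- by move=> x Gx; rewrite det_orthogonal_sqr ?fOx.
Qed.

Lemma O2cube_abelian_normal_squares :
  exists K : {group gT},
    [/\ K <| G, abelian K & {in G, forall x, (x ^+ 2)%g \in K}].
Proof.
have [fO1 fO2 fO3] : [/\ {in G, forall x, orthogonal2 (f1 x)},
    {in G, forall x, orthogonal2 (f2 x)} & {in G, forall x, orthogonal2 (f3 x)}].
  by split=> x /fO[].
have [fM1 fM2 fM3] : [/\ {in G &, forall x y, f1 (x * y)%g = f1 x *m f1 y},
    {in G &, forall x y, f2 (x * y)%g = f2 x *m f2 y}
  & {in G &, forall x y, f3 (x * y)%g = f3 x *m f3 y}].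
  by split=> x y Gx Gy; case: (fM Gx Gy).
have [K1 [nK1G detK1 sqrK1]] := det_kernel fO1 fM1.
have [K2 [nK2G detK2 sqrK2]] := det_kernel fO2 fM2.
have [K3 [nK3G detK3 sqrK3]] := det_kernel fO3 fM3.
have nKG : K1 :&: K2 :&: K3 <| G by rewrite !normalI.
exists (K1 :&: K2 :&: K3)%G; split=> //.
- apply/centsP=> x Kx y Ky.
  have Gx := subsetP (normal_sub nKG) x Kx; have Gy := subsetP (normal_sub nKG) y Ky.
  move: Kx Ky; rewrite !inE => /andP[/andP[K1x K2x] K3x] /andP[/andP[K1y K2y] K3y].
  have [Ox1 Ox2 Ox3] := fO Gx; have [Oy1 Oy2 Oy3] := fO Gy.
  apply: f_inj; rewrite ?groupM //.
  + by rewrite !fM1 // rotations_commute ?detK1.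
  + by rewrite !fM2 // rotations_commute ?detK2.
  + by rewrite !fM3 // rotations_commute ?detK3.
- by move=> x Gx; rewrite !inE sqrK1 ?sqrK2 ?sqrK3.
Qed.

End O2Cube.

Theorem proposition2p8 (R : realType) (gT : finGroupType) (G : {group gT}) :
  subgroup_O2cube R G -> cyclic 'F(G) ->
  exists H : {group gT}, [/\ H <| G, cyclic H & 2.-group (G / H)].
Proof.
move=> [f1 [f2 [f3 [fO fM f_inj]]]] cycF.
have [K [nKG abK sqrK]] := O2cube_abelian_normal_squares fO fM f_inj.
have sKF : K \subset 'F(G) := Fitting_max nKG (abelian_nil abK).
exists 'F(G)%G; split => //; first exact: Fitting_normal.
by apply: quotient_pgroup_of_expn => // x Gx; apply: (subsetP sKF); apply: sqrK.
Qed.
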